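(* Let $G$ be a finite group, let $S$ be an irreducible $\mathbb{R}G$-module of odd dimension such that $(G,S)$ has the eigenvalue one property, and let $V$ be the direct sum of an odd number of copies of $S$. Then $(G,V)$ has the eigenvalue one property.
   Context: For a finite group $G$ and a finite-dimensional $\mathbb{R}G$-module $W$ affording $\rho\colon G\to\mathrm{GL}(W)$, the pair $(G,W)$ has the eigenvalue one property if for every $n\in N_{\mathrm{GL}(W)}(\rho(G))$ of finite order there is $g\in G$ such that $\rho(g)n$ has eigenvalue $1$. *)

From mathcomp Require Import all_boot all_order all_algebra all_fingroup.
From mathcomp Require Import mxrepresentation.
From mathcomp Require Import reals.
Set Implicit Arguments. Unset Strict Implicit. Unset Printing Implicit Defensive.
Import GRing.Theory Num.Theory.
Local Open Scope ring_scope.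

(* (G, W) has the eigenvalue one property, where W = R^n is the module
   affording rho : gT -> 'M[R]_n (MathComp convention: row vectors,
   matrices acting on the right). *)
Definition eigenvalue_one_property (R : realType) (gT : finGroupType)
    (G : {group gT}) (n : nat) (rho : gT -> 'M[R]_n) : Prop :=
  forall N : 'M[R]_n,
    N \in unitmx ->
    (forall g, g \in G -> exists2 h, h \in G & N *m rho g *m invmx N = rho h) ->
    (forall h, h \in G -> exists2 g, g \in G & N *m rho g *m invmx N = rho h) ->
    (exists k : nat, (0 < k)%N /\ N ^+ k = 1%:M) ->
    exists2 g, g \in G & eigenvalue (rho g *m N) 1.

(* The direct sum of m copies of the module affording rho:
   the block-diagonal matrix diag(rho g, ..., rho g) ; its dimension is
   \sum_(i < m) n = m * n. *)
Definition copies_mx (R : realType) (gT : finGroupType) (n m : nat)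
    (rho : gT -> 'M[R]_n) (g : gT) : 'M[R]_(\sum_(i < m) n) :=
  \mxdiag_(i < m) rho g.

From mathcomp Require Import all_boot all_order all_algebra all_fingroup.
From mathcomp Require Import mxrepresentation.
From mathcomp Require Import reals polyrcf.
Set Implicit Arguments. Unset Strict Implicit. Unset Printing Implicit Defensive.
Import GRing.Theory Num.Theory.
Local Open Scope ring_scope.

(* Let N be a matrix of finite order k normalising diag(rho G) on V = S^m.
   Every block of N conjugates rho g into rho h for one and the same h, so by
   Schur's lemma a nonzero block X is invertible; as dim S is odd, every
   endomorphism commuting with rho has a real eigenvalue and is thus scalar,
   so every block is a real multiple of X, i.e. N = A (x) X.  From N^k = 1 we
   get A^k = c and X^k = c^-1.  As m is odd, A has a real eigenvalue l, and
   l^k = c; hence l X has finite order and normalises rho(G), so the property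
   for S gives g and u with u (rho g) (l X) = u.  For w with w A = l w, the
   vector w (x) u is then fixed by diag(rho g) N. *)

Lemma scalar_mx_inj (R : pzSemiRingType) n (a b : R) :
  (0 < n)%N -> a%:M = b%:M :> 'M[R]_n -> a = b.
Proof.
by move=> n_gt0 /matrixP/(_ (Ordinal n_gt0) (Ordinal n_gt0)); rewrite !mxE eqxx.
Qed.

Lemma unitmx_neq0 (F : fieldType) n (A : 'M[F]_n) :
  (0 < n)%N -> A \in unitmx -> A != 0.
Proof.
move=> n_gt0 uA; apply: contraTneq n_gt0 => A0.
by rewrite -(mxrank_unit uA) A0 mxrank0.
Qed.

Lemma exp_scalemx (R : comPzRingType) n (a : R) (A : 'M[R]_n) k :
  (a *: A) ^+ k = a ^+ k *: A ^+ k.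
Proof.
elim: k => [|k IHk]; first by rewrite !expr0 scale1r.
by rewrite !exprS IHk -!mulmxE -scalemxAl -scalemxAr scalerA.
Qed.

Lemma eigenvalueZ (F : fieldType) n (A : 'M[F]_n) a b :
  eigenvalue A a -> eigenvalue (b *: A) (b * a).
Proof.
case/eigenvalueP=> v vA nz_v; apply/eigenvalueP; exists v => //.
by rewrite -scalemxAr vA scalerA mulrC.
Qed.

Lemma eigenvalue_expr_scalar (F : fieldType) n (A : 'M[F]_n) a c k :
  eigenvalue A a -> A ^+ k = c%:M -> a ^+ k = c.
Proof.
case/eigenvalueP=> v vA nz_v Ak.
have vAt t : v *m A ^+ t = a ^+ t *: v.
  elim: t => [|t IHt]; first by rewrite !expr0 mulmx1 scale1r.
  by rewrite exprSr -mulmxE mulmxA IHt -scalemxAl vA scalerA -exprSr.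
have := vAt k; rewrite Ak mul_mx_scalar => /eqP; rewrite -subr_eq0 -scalerBl.
by rewrite scaler_eq0 (negbTE nz_v) orbF subr_eq0 => /eqP.
Qed.

Lemma odd_eigenvalue (R : rcfType) n (A : 'M[R]_n) :
  odd n -> exists a, eigenvalue A a.
Proof.
move=> odd_n; have [|a ra] := @odd_poly_root R (char_poly A).
  by rewrite size_char_poly /= odd_n.
by exists a; rewrite eigenvalue_root_char.
Qed.

Section KroneckerProduct.
Variables (R : comPzRingType) (m n : nat).

Definition kron_mx (A : 'M[R]_m) (X : 'M[R]_n) : 'M[R]_(\sum_(i < m) n) :=
  \mxblock_(i, j) (A i j *: X).

Lemma submxblock_kron A X i j : submxblock (kron_mx A X) i j = A i j *: X.
Proof. exact: mxblockK. Qed.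

Lemma mul_kron_mx A1 X1 A2 X2 :
  kron_mx A1 X1 *m kron_mx A2 X2 = kron_mx (A1 *m A2) (X1 *m X2).
Proof.
rewrite /kron_mx mul_mxblock; apply/eq_mxblock => i j.
rewrite mxE scaler_suml; apply: eq_bigr => l _.
by rewrite -scalemxAl -scalemxAr scalerA.
Qed.

Lemma kron_mx1 : kron_mx 1%:M 1%:M = 1%:M.
Proof.
rewrite -(mxdiagZ (p_ := fun=> n)) /mxdiag /kron_mx; apply/eq_mxblock => i j.
by rewrite mxE; case: eqP => _; rewrite ?conform_mx_id ?scale1r ?scale0r.
Qed.

Lemma kron_mxX A X k : kron_mx A X ^+ k = kron_mx (A ^+ k) (X ^+ k).
Proof.
elim: k => [|k IHk]; first by rewrite !expr0 kron_mx1.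
by rewrite !exprS IHk -!mulmxE mul_kron_mx.
Qed.

Lemma kron_mxZ (a : R) (A : 'M[R]_m) (X : 'M[R]_n) :
  kron_mx (a *: A) X = kron_mx A (a *: X).
Proof. by apply/mxblockP => i j; rewrite !submxblock_kron mxE scalerA mulrC. Qed.

End KroneckerProduct.

Lemma submxrowZ (R : pzRingType) m q (q_ : 'I_q -> nat) (c : R)
    (M : 'M[R]_(m, \sum_i q_ i)) j :
  submxrow (c *: M) j = c *: submxrow M j.
Proof. by apply/matrixP => i k; rewrite !mxE. Qed.

Lemma eigenvalue_mxdiag_kron (F : fieldType) m n (D X : 'M[F]_n) (A : 'M[F]_m) a b :
  eigenvalue (D *m X) a -> eigenvalue A b ->
  eigenvalue (\mxdiag_(i < m) D *m kron_mx A X) (b * a).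
Proof.
case/eigenvalueP=> u uDX nz_u /eigenvalueP[w wA nz_w].
apply/eigenvalueP; exists (\mxrow_j (w 0 j *: u)).
  rewrite mulmxA mul_mxrow_mxdiag mul_mxrow_mxblock.
  apply/mxrowP => j; rewrite submxrowZ !mxrowK.
  transitivity (\sum_i (w 0 i * A i j) *: (a *: u)).
    apply: eq_bigr => i _.
    by rewrite -!scalemxAl -scalemxAr -mulmxA uDX !scalerA mulrC.
  have wAj : \sum_i w 0 i * A i j = b * w 0 j.
    by have := congr1 (fun M : 'rV_m => M 0 j) wA; rewrite !mxE.
  by rewrite -scaler_suml wAj !scalerA mulrAC.
apply: contra_neq nz_w => wu0; apply/rowP => j.
have /eqP := congr1 (fun v : 'rV_(\sum_(i < m) n) => submxrow v j) wu0.
by rewrite mxrowK submxrow0 scaler_eq0 (negbTE nz_u) orbF mxE => /eqP.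
Qed.

Lemma kron_mx_expr_eq1 (F : fieldType) m n (A : 'M[F]_m) (X : 'M[F]_n) k :
    (0 < m)%N -> (0 < n)%N -> kron_mx A X ^+ k = 1%:M ->
  exists2 c, c != 0 & A ^+ k = c%:M /\ X ^+ k = c^-1%:M.
Proof.
move=> m_gt0 n_gt0; rewrite kron_mxX -kron_mx1 => eqAX.
have blocks i j : (A ^+ k) i j *: X ^+ k = (1%:M : 'M_m) i j *: 1%:M.
  by rewrite -!submxblock_kron eqAX.
pose c := (A ^+ k) (Ordinal m_gt0) (Ordinal m_gt0).
have cXk : c *: X ^+ k = 1%:M by rewrite blocks mxE eqxx scale1r.
have c_neq0 : c != 0.
  apply: contraNneq (unitmx_neq0 n_gt0 (unitmx1 F n)) => c0.
  by rewrite -cXk c0 scale0r.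
have Xk : X ^+ k = c^-1%:M by rewrite -scalemx1 -cXk scalerA mulVf ?scale1r.
exists c => //; split => //; apply/matrixP => i j.
have := blocks i j; rewrite Xk !scale_scalar_mx mulr1 => /(scalar_mx_inj n_gt0).
by rewrite !mxE => eqAij; rewrite -[LHS](divfK c_neq0) eqAij mulr_natl.
Qed.

Lemma submxblock_mxdiag_comm (R : pzSemiRingType) p (p_ : 'I_p -> nat)
    (N : 'M[R]_(\sum_i p_ i)) (D1 D2 : forall i, 'M[R]_(p_ i)) :
  N *m \mxdiag_i D1 i = \mxdiag_i D2 i *m N ->
  forall i j, submxblock N i j *m D1 j = D2 i *m submxblock N i j.
Proof.
rewrite -[N]submxblockK mul_mxblock_mxdiag mul_mxdiag_mxblock => eqN i j.
by have := congr1 (submxblock ^~ i ^~ j) eqN; rewrite !mxblockK.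
Qed.

Lemma submxblock_neq0 (R : nmodType) p q (p_ : 'I_p -> nat) (q_ : 'I_q -> nat)
    (N : 'M[R]_(\sum_i p_ i, \sum_j q_ j)) :
  N != 0 -> exists i j, submxblock N i j != 0.
Proof.
move=> nzN.
suff /existsP[i /existsP[j nzNij]] : [exists i, exists j, submxblock N i j != 0].
  by exists i, j.
apply: contraNT nzN => /existsPn N0; apply/eqP/mxblockP => i j.
by rewrite submxblock0; apply/eqP; move/existsPn/(_ j)/negPn: (N0 i).
Qed.

Definition mx_normalizes (R : pzRingType) (gT : finGroupType) (G : {set gT}) n
    (rho : gT -> 'M[R]_n) (N : 'M[R]_n) : Prop :=
  (forall g, g \in G -> exists2 h, h \in G & N *m rho g = rho h *m N) /\
  (forall h, h \in G -> exists2 g, g \in G & N *m rho g = rho h *m N).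

Lemma mx_normalizesZ (R : comPzRingType) (gT : finGroupType) (G : {set gT}) n
    (rho : gT -> 'M[R]_n) (N : 'M[R]_n) a :
  mx_normalizes G rho N -> mx_normalizes G rho (a *: N).
Proof.
have scaleN g h : N *m rho g = rho h *m N -> a *: N *m rho g = rho h *m (a *: N).
  by move=> eqN; rewrite -scalemxAl eqN scalemxAr.
by case=> nN1 nN2; split=> [g /nN1 | h /nN2] [x Gx /scaleN]; exists x.
Qed.

Lemma mx_normalizes_conj (R : comUnitRingType) (gT : finGroupType) (G : {set gT}) n
    (rho : gT -> 'M[R]_n) (N : 'M[R]_n) :
    N \in unitmx ->
  mx_normalizes G rho N <->
  (forall g, g \in G -> exists2 h, h \in G & N *m rho g *m invmx N = rho h) /\
  (forall h, h \in G -> exists2 g, g \in G & N *m rho g *m invmx N = rho h).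
Proof.
move=> uN.
have conjE g h : N *m rho g *m invmx N = rho h <-> N *m rho g = rho h *m N.
  by split=> [<- | ->]; rewrite ?mulmxKV ?mulmxK.
by split=> -[nN1 nN2]; split=> [g /nN1 | h /nN2] [x Gx /conjE]; exists x.
Qed.

Section TwistedSchur.
Variables (F : fieldType) (gT : finGroupType) (G : {group gT}) (n : nat).
Variable rS : mx_representation F G n.
Hypothesis irr_rS : mx_irreducible rS.

Lemma mx_Schur_twisted (X : 'M[F]_n) :
  (forall h, h \in G -> exists2 g, g \in G & X *m rS g = rS h *m X) ->
  X != 0 -> X \in unitmx.
Proof.
move=> twX nzX; have [_ irr_full] := (mx_irrP rS).1 irr_rS.
rewrite -row_free_unit -kermx_eq0; apply: contraNT nzX => nzK.
have modK : mxmodule rS (kermx X).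
  apply/mxmoduleP => h Gh; have [g _ eqX] := twX h Gh.
  have := congr1 (mulmx (kermx X)) eqX; rewrite !mulmxA mulmx_ker mul0mx.
  by rewrite sub_kermx => /esym/eqP.
have uK : kermx X \in unitmx by rewrite -row_full_unit irr_full.
by rewrite -(mulKmx uK X) mulmx_ker mulmx0.
Qed.

End TwistedSchur.

Section OddSchur.
Variables (R : rcfType) (gT : finGroupType) (G : {group gT}) (n : nat).
Variable rS : mx_representation R G n.
Hypotheses (irr_rS : mx_irreducible rS) (odd_n : odd n).

Lemma odd_irr_cent_scalar (Y : 'M[R]_n) : centgmx rS Y -> exists a, Y = a%:M.
Proof.
move=> cY; have [a /eigenvalueP[v vY nz_v]] := odd_eigenvalue Y odd_n.
exists a; apply/eqP; rewrite -subr_eq0; apply: contraNT nz_v => nzYa.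
have cYa : centgmx rS (Y - a%:M).
  by apply/centgmxP => x Gx; rewrite mulmxBl mulmxBr (centgmxP cY) ?scalar_mxC.
have uYa := mx_Schur irr_rS cYa nzYa.
by rewrite -(mulmxK uYa v) mulmxBr vY mul_mx_scalar subrr mul0mx.
Qed.

Lemma twisted_intertwiners_proportional (X Y : 'M[R]_n) :
    X \in unitmx ->
    (forall h, h \in G -> exists2 g, g \in G &
       X *m rS g = rS h *m X /\ Y *m rS g = rS h *m Y) ->
  exists a, Y = a *: X.
Proof.
move=> uX twXY; suff [a YXa] : exists a, Y *m invmx X = a%:M.
  by exists a; rewrite -mul_scalar_mx -YXa mulmxKV.
apply: odd_irr_cent_scalar; apply/centgmxP => h Gh.
have [g _ [eqX eqY]] := twXY h Gh.
have eqXV : rS g *m invmx X = invmx X *m rS h.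
  have := congr1 (fun M => invmx X *m M *m invmx X) eqX.
  by rewrite /= mulKmx // mulmxA mulmxK.
by have := congr1 (mulmx Y) eqXV; rewrite !mulmxA eqY => /esym.
Qed.

End OddSchur.

Lemma copies_mx_normalizer_kron (R : rcfType) (gT : finGroupType) (G : {group gT})
    n (rS : mx_representation R G n) m (N : 'M[R]_(\sum_(i < m) n)) :
    mx_irreducible rS -> odd n -> (0 < m)%N ->
    N \in unitmx -> mx_normalizes G (fun g => \mxdiag_(i < m) rS g) N ->
  exists A X, [/\ N = kron_mx A X, X \in unitmx & mx_normalizes G rS X].
Proof.
move=> irr_rS odd_n m_gt0 uN [nN1 nN2].
have blocksE g h : N *m \mxdiag_(i < m) rS g = \mxdiag_(i < m) rS h *m N ->
    forall i j, submxblock N i j *m rS g = rS h *m submxblock N i j.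
  exact: submxblock_mxdiag_comm.
have dim_gt0 : (0 < \sum_(i < m) n)%N.
  by rewrite big_const_ord iter_addn addn0 muln_gt0 m_gt0 odd_gt0.
have [i0 [j0 nzX]] := submxblock_neq0 (unitmx_neq0 dim_gt0 uN).
pose X : 'M[R]_n := submxblock N i0 j0.
have twN h : h \in G -> exists2 g, g \in G &
    forall i j, submxblock N i j *m rS g = rS h *m submxblock N i j.
  by case/nN2=> g Gg /blocksE; exists g.
have uX : X \in unitmx.
  apply: (mx_Schur_twisted (X := X) irr_rS _ nzX) => h /twN[g Gg eqN].
  by exists g => //; exact: eqN.
have Nprop (ij : 'I_m * 'I_m) : exists a, submxblock N ij.1 ij.2 = a *: X.
  apply: (twisted_intertwiners_proportional (Y := submxblock N ij.1 ij.2)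
            irr_rS odd_n uX).
  by move=> h /twN[g Gg eqN]; exists g => //; split; apply: eqN.
have [f Nf] := fin_all_exists Nprop.
exists (\matrix_(i, j) f (i, j)), X; split => //.
  by apply/mxblockP => i j; rewrite submxblock_kron mxE; exact: Nf (i, j).
by split=> [g /nN1 | h /nN2] [x Gx /blocksE eqN]; exists x => //; exact: eqN.
Qed.

Theorem lemma3p1p2 (R : realType) (gT : finGroupType) (G : {group gT})
    (n : nat) (rS : mx_representation R G n) (m : nat) :
  odd n -> mx_irreducible rS ->
  eigenvalue_one_property G rS ->
  odd m ->
  eigenvalue_one_property G (copies_mx m rS).
Proof.
move=> odd_n irr_rS ev_rS odd_m N uN nN1 nN2 [k [k_gt0 Nk1]].
have nN := (mx_normalizes_conj _ _ uN).2 (conj nN1 nN2).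
have [A [X [NAX uX nX]]] :=
  copies_mx_normalizer_kron irr_rS odd_n (odd_gt0 odd_m) uN nN.
subst N.
have [c c_neq0 [Ak Xk]] := kron_mx_expr_eq1 (odd_gt0 odd_m) (odd_gt0 odd_n) Nk1.
have [l Al] := odd_eigenvalue A odd_m.
have lk : l ^+ k = c := eigenvalue_expr_scalar Al Ak.
have l_neq0 : l != 0.
  by apply: contraNneq c_neq0 => l0; rewrite -lk l0 expr0n gtn_eqF.
have ulX : l *: X \in unitmx by rewrite unitmxZ ?unitfE.
have [nlX1 nlX2] := (mx_normalizes_conj _ _ ulX).1 (mx_normalizesZ l nX).
have lXk : (l *: X) ^+ k = 1%:M by rewrite exp_scalemx Xk lk scale_scalar_mx mulfV.
have [g Gg lX1] := ev_rS _ ulX nlX1 nlX2 (ex_intro _ k (conj k_gt0 lXk)).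
exists g => //; have := eigenvalue_mxdiag_kron lX1 (eigenvalueZ l^-1 Al).
by rewrite mulr1 mulVf // kron_mxZ scalerK.
Qed.
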